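(* Let $V$ be a finite set and $\{\eta(t),t\ge0\}$ a consistent configuration process on $\Omega$. Then for all $f:\Omega\to\mathbb R$, all $\eta\in\Omega$ and all $t\ge0$, $$\sum_{i\in V}\mathbb E_\eta\big[\eta_i(t)f(\eta(t)-\delta_i)\big]=\sum_{i\in V}\eta_i\,\mathbb E_{\eta-\delta_i}\big[f(\eta(t))\big],$$ where terms with $\eta_i(t)=0$, resp. $\eta_i=0$, are zero.
   Context: $\Lambda\subseteq\mathbb N_0$ is the single-site state space, $\Omega=\{\eta\in\Lambda^V:\sum_x\eta_x<\infty\}$, $\delta_z$ the configuration with one particle at $z$. A configuration process is a Markov process on $\Omega$ conserving the number of particles, with generator $\mathcal L$; $\mathbb E_\eta$ denotes expectation for the process started at $\eta$. It is consistent if $[\mathcal L,\mathcal A]=0$, where $\mathcal Af(\eta)=\sum_{x\in V}\eta_xf(\eta-\delta_x)$ (terms with $\eta_x=0$ are zero). *)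

From HB Require Import structures.
From mathcomp Require Import all_boot all_order all_algebra.
From mathcomp Require Import all_classical all_reals all_analysis.
Set Implicit Arguments. Unset Strict Implicit. Unset Printing Implicit Defensive.
Import Order.TTheory GRing.Theory Num.Theory.
Local Open Scope ring_scope.

Section ConfigProcess.
Variables (V : finType) (R : realType).

Definition conf := {ffun V -> nat}.

Definition tot (eta : conf) : nat := (\sum_(x : V) eta x)%N.

(* eta - delta_x  (only used where eta_x > 0, or multiplied by eta_x = 0) *)
Definition subdelta (eta : conf) (x : V) : conf :=
  [ffun y => if y == x then (eta y).-1 else eta y].

Definition inOmega (Lam : pred nat) (eta : conf) : bool := [forall x, Lam (eta x)].

(* Lambda is downward closed, so that eta - delta_x is in Omega when eta_x > 0 *)
Definition down_closed (Lam : pred nat) : Prop := forall n, Lam n.+1 -> Lam n.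

Definition lift_conf n (g : {ffun V -> 'I_n}) : conf := [ffun x => nat_of_ord (g x)].

(* Generator of the Markov jump process with rates q (eta -> xi):
   L f (eta) = sum_xi q(eta,xi) (f xi - f eta); since the number of particles
   is conserved, xi ranges over the finite set of configurations with tot xi = tot eta. *)
Definition gen (q : conf -> conf -> R) (f : conf -> R) (eta : conf) : R :=
  \sum_(g : {ffun V -> 'I_(tot eta).+1} | tot (lift_conf g) == tot eta)
     q eta (lift_conf g) * (f (lift_conf g) - f eta).

Definition annih (f : conf -> R) (eta : conf) : R :=
  \sum_(x : V) (eta x)%:R * f (subdelta eta x).

Definition config_process (Lam : pred nat) (q : conf -> conf -> R) : Prop :=
  (forall eta xi, eta != xi -> 0 <= q eta xi) /\
  (forall eta xi, q eta xi != 0 ->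
     [/\ inOmega Lam eta, inOmega Lam xi & tot xi = tot eta]).

Definition consistent (Lam : pred nat) (q : conf -> conf -> R) : Prop :=
  forall (f : conf -> R) (eta : conf), inOmega Lam eta ->
    gen q (annih f) eta = annih (gen q f) eta.

(* E_eta[f(eta(t))] = (e^{tL} f)(eta): transition semigroup of the process
   (on each finite level set {tot = N} the process is a finite-state chain) *)
Definition expect (q : conf -> conf -> R) (f : conf -> R) (t : R) (eta : conf) : R :=
  limn (fun n => \sum_(k < n) t ^+ k / (k`!)%:R * iter k (gen q) f eta).

End ConfigProcess.

From mathcomp Require Import all_boot all_order all_algebra.
From mathcomp Require Import all_classical all_reals all_analysis.
From mathcomp Require Import ring.
Import Order.TTheory GRing.Theory Num.Theory numFieldNormedType.Exports.
Set Implicit Arguments. Unset Strict Implicit.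
Local Open Scope ring_scope.

(** Expectations are the exponential series of the generator, [E_eta[f(eta(t))]
  = sum_k t^k/k! (L^k f)(eta)].  Consistency [L A = A L] on Omega iterates to
  [L^k A = A L^k] on Omega, because [L g (eta)] only involves the values of [g]
  on Omega.  Summing the series term by term, which is legitimate because on
  each level set [{tot = N}] the generator is a bounded operator, gives
  [e^{tL} A f = A e^{tL} f]; the left-hand side of the theorem is
  [e^{tL} A f] by linearity. *)

Lemma limn_sum (R : realType) (I : Type) (r : seq I) (u : I -> R ^nat) :
  (forall i, cvgn (u i)) ->
  limn (fun n => \sum_(i <- r) u i n) = \sum_(i <- r) limn (u i).
Proof.
move=> u_cvg; apply: cvg_lim => //.
exact: (cvg_big (x0 := 0) (P := xpredT) add_continuous _ (fun i _ => u_cvg i)).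
Qed.

Section Generator.
Variables (V : finType) (R : realType) (q : conf V -> conf V -> R).

Lemma gen_sum (I : Type) (r : seq I) (h : I -> conf V -> R) eta :
  gen q (fun xi => \sum_(i <- r) h i xi) eta = \sum_(i <- r) gen q (h i) eta.
Proof.
rewrite /gen exchange_big /=; apply: eq_bigr => g _.
by rewrite -sumrB mulr_sumr.
Qed.

Lemma iter_gen_sum (I : Type) (r : seq I) (h : I -> conf V -> R) k eta :
  iter k (gen q) (fun xi => \sum_(i <- r) h i xi) eta
  = \sum_(i <- r) iter k (gen q) (h i) eta.
Proof.
elim: k eta => [//|k IHk] eta /=; rewrite -gen_sum.
by apply: eq_bigr => g _; rewrite !IHk.
Qed.

Definition level N : pred {ffun V -> 'I_N.+1} := fun g => tot (lift_conf g) == N.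
Arguments level : clear implicits.

Definition level_norm N (h : conf V -> R) : R :=
  \sum_(g | level N g) `|h (lift_conf g)|.

Definition level_rate N : R :=
  2 * \sum_(g | level N g) \sum_(g' | level N g') `|q (lift_conf g) (lift_conf g')|.

Lemma level_norm_ge0 N h : 0 <= level_norm N h.
Proof. exact: sumr_ge0. Qed.

Lemma level_rate_ge0 N : 0 <= level_rate N.
Proof. by rewrite mulr_ge0 // !sumr_ge0 // => g _; rewrite sumr_ge0. Qed.

Lemma lift_conf_level (xi : conf V) :
  exists2 g : {ffun V -> 'I_(tot xi).+1}, level (tot xi) g & lift_conf g = xi.
Proof.
have xi_lt v : (xi v < (tot xi).+1)%N.
  by rewrite ltnS /tot (bigD1 v) //= leq_addr.
exists [ffun v => Ordinal (xi_lt v)]; last by apply/ffunP => v; rewrite !ffunE.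
by rewrite /level (_ : lift_conf _ = xi) //; apply/ffunP => v; rewrite !ffunE.
Qed.

Lemma norm_le_level_norm h xi : `|h xi| <= level_norm (tot xi) h.
Proof.
have [g g_lev g_xi] := lift_conf_level xi.
by rewrite /level_norm (bigD1 g) //= g_xi lerDl sumr_ge0.
Qed.

Lemma gen_level N h eta : tot eta = N ->
  gen q h eta = \sum_(g | level N g) q eta (lift_conf g) * (h (lift_conf g) - h eta).
Proof. by move=> <-. Qed.

Lemma level_norm_gen N h :
  level_norm N (gen q h) <= level_rate N * level_norm N h.
Proof.
have h_le xi : tot xi = N -> `|h xi| <= level_norm N h.
  by move=> <-; exact: norm_le_level_norm.
rewrite /level_rate mulrAC mulrC mulr_suml; apply: ler_sum => g /eqP g_lev.
rewrite (gen_level _ g_lev) mulr_suml.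
apply: le_trans (ler_norm_sum _ _ _) _; apply: ler_sum => g' /eqP g'_lev.
rewrite normrM ler_wpM2l // mulr_natl mulr2n.
by apply: le_trans (ler_normB _ _) _; rewrite lerD ?h_le.
Qed.

Lemma norm_iter_gen_le k h eta :
  `|iter k (gen q) h eta| <= level_rate (tot eta) ^+ k * level_norm (tot eta) h.
Proof.
apply: le_trans (norm_le_level_norm _ _) _.
elim: k => [|k IHk] /=; first by rewrite expr0 mul1r.
apply: le_trans (level_norm_gen _ _) _.
by rewrite exprS -mulrA ler_wpM2l // level_rate_ge0.
Qed.

Lemma expect_cvg h (t : R) eta :
  cvgn (fun n => \sum_(k < n) t ^+ k / k`!%:R * iter k (gen q) h eta).
Proof.
set C := level_rate (tot eta); set B := level_norm (tot eta) h.
set a := fun k => t ^+ k / k`!%:R * iter k (gen q) h eta.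
rewrite (_ : (fun n => _) = series a); last first.
  by apply/funext => n; rewrite /series /= big_mkord.
apply: normed_cvg; apply: (series_le_cvg (v_ := fun k => B * exp_coeff (`|t| * C) k)).
- by move=> k; rewrite normr_ge0.
- move=> k; rewrite /= mulr_ge0 ?level_norm_ge0 ?exp_coeff_ge0 //.
  by rewrite mulr_ge0 ?level_rate_ge0.
- move=> k; rewrite /a /exp_coeff /= normrM normf_div normr_nat normrX exprMn.
  rewrite [leRHS](_ : _ = `|t| ^+ k / k`!%:R * (C ^+ k * B)); last by ring.
  by rewrite ler_wpM2l ?divr_ge0 ?exprn_ge0 // norm_iter_gen_le.
- rewrite (_ : (fun k => _) = B *: exp_coeff (`|t| * C)) //.
  exact: is_cvg_seriesZ (is_cvg_series_exp_coeff _).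
Qed.

Lemma expect_sum (I : Type) (r : seq I) (h : I -> conf V -> R) t eta :
  \sum_(i <- r) expect q (h i) t eta
  = expect q (fun xi => \sum_(i <- r) h i xi) t eta.
Proof.
rewrite /expect -limn_sum => [|i]; last exact: @expect_cvg.
congr (lim (_ @ \oo)%classic); apply/funext => n; rewrite exchange_big /=.
by apply: eq_bigr => k _; rewrite iter_gen_sum mulr_sumr.
Qed.

Section Consistent.
Variable Lam : pred nat.
Hypotheses (q_process : config_process Lam q) (q_consistent : consistent Lam q).

Lemma gen_eq_on (h1 h2 : conf V -> R) eta :
  (forall xi, inOmega Lam xi -> h1 xi = h2 xi) -> gen q h1 eta = gen q h2 eta.
Proof.
case: q_process => _ q_Omega h12; apply: eq_bigr => g _.
have [->|/q_Omega[eta_Omega g_Omega _]] := eqVneq (q eta (lift_conf g)) 0.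
  by rewrite !mul0r.
by rewrite !h12.
Qed.

Lemma iter_gen_annih k f eta : inOmega Lam eta ->
  iter k (gen q) (annih f) eta = annih (iter k (gen q) f) eta.
Proof.
elim: k eta => [//|k IHk] eta eta_Omega /=.
by rewrite (gen_eq_on _ IHk) q_consistent.
Qed.

Lemma expect_annih f t eta : inOmega Lam eta ->
  expect q (annih f) t eta = annih (expect q f t) eta.
Proof.
move=> eta_Omega; rewrite /expect [RHS]/annih.
under [RHS]eq_bigr => x _ do
  rewrite -(cvg_lim _ (cvgMl_tmp (@expect_cvg f t (subdelta eta x)))) //.
rewrite -limn_sum => [|x]; last exact: is_cvgMl_tmp (@expect_cvg _ _ _).
congr (lim (_ @ \oo)%classic); apply/funext => n.
under [RHS]eq_bigr => x _ do rewrite mulr_sumr.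
rewrite exchange_big /=; apply: eq_bigr => k _.
rewrite iter_gen_annih // /annih mulr_sumr.
by apply: eq_bigr => x _; rewrite mulrCA.
Qed.

End Consistent.

End Generator.

Theorem proposition3p5 (V : finType) (R : realType) (Lam : pred nat)
  (q : conf V -> conf V -> R) :
  down_closed Lam ->
  config_process Lam q ->
  consistent Lam q ->
  forall (f : conf V -> R) (eta : conf V) (t : R),
    inOmega Lam eta -> 0 <= t ->
    \sum_(i : V) expect q (fun xi => (xi i)%:R * f (subdelta xi i)) t eta
    = \sum_(i : V) (eta i)%:R * expect q f t (subdelta eta i).
Proof.
(* [expect] is defined at every configuration and every time. *)
move=> _ q_process q_consistent f eta t eta_Omega _.
by rewrite expect_sum (expect_annih q_process q_consistent _ _ eta_Omega).
Qed.
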